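(* Given $i \in [n-3]$, $j \in [n-2]$ and $k\in [n-1]$ such that $i\leq j\leq k$, we have $\langle i,j,k\rangle\in \mathcal{W}^{\Theta}$ if, and only if, one of the following happens: (1) $a_i,a_j,a_k \not\in\Theta$; (2) $j=i+1$, $a_i \in \Theta$ and $a_{i+1},a_k \not\in\Theta$; (3) $k=j+1$, $a_j \in \Theta$ and $a_i, a_{j+1} \not\in\Theta$; (4) $k-1=j=i+1$, $a_i,a_{i+1} \in \Theta$ and $a_{i+2} \not\in\Theta$.
   Context: Let $n\geq 2$ and $[m]=\{1,\dots,m\}$. Let $S_n$ be the symmetric group (Weyl group of type $A_{n-1}$), generated by the simple reflections $s_i=(i,i+1)$, $i\in[n-1]$, with simple roots $\Sigma=\{a_1,\dots,a_{n-1}\}$. For $\Theta\subset\Sigma$, let $\mathcal{W}^{\Theta}=\{w\in S_n : \ell(w)<\ell(ws_i) \text{ for all } a_i\in\Theta\}$ be the set of minimal length representatives of the cosets of the parabolic subgroup $\mathcal{W}_\Theta=\langle s_i : a_i\in\Theta\rangle$; equivalently, writing $\Sigma\setminus\Theta=\{a_{k_1},\dots,a_{k_r}\}$ with $k_1<\dots<k_r$, $\mathcal{W}^{\Theta}$ consists of the permutations $w$ (in one-line notation $w(1)\cdots w(n)$) whose descents can occur only at positions $k_1,\dots,k_r$. The code of $w\in S_n$ is $\alpha=(\alpha_1,\dots,\alpha_{n-1})$ with $\alpha_i=\#\{k>i : w(k)<w(i)\}$. The code spectrum of $w$ is the unique weakly increasing sequence $0<b_1\leq b_2\leq\cdots\leq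 b_l<n$ such that $\alpha_i=\#\{j : b_j=i\}$ for each $i$; the permutation with code spectrum $b_1,\dots,b_l$ is denoted $\langle b_1,\dots,b_l\rangle$. Thus $\langle i,j,k\rangle$ denotes the permutation of length $3$ whose code has one box in each of rows $i$, $j$, $k$ (counted with multiplicity). *)

From mathcomp Require Import all_boot all_fingroup.
Set Implicit Arguments. Unset Strict Implicit. Unset Printing Implicit Defensive.

(* Conventions: positions and values are 1-based, as in the paper.
   A permutation w : 'S_n acts on 'I_n = {0,..,n-1}; its one-line notation
   w(1) ... w(n) is obtained by shifting by one. *)

Definition oneline (n : nat) (w : 'S_n) : seq nat :=
  [seq (w x).+1 | x <- enum 'I_n].

Definition wl (n : nat) (w : 'S_n) (p : nat) : nat := nth 0 (oneline w) p.-1.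

Definition code (n : nat) (w : 'S_n) (i : nat) : nat :=
  count (fun k => wl w k < wl w i) (iota i.+1 (n - i)).

(* w has code spectrum b = b_1 <= ... <= b_l :  alpha_m = #{ j : b_j = m }
   for every m in [n-1]; so the permutation <b_1,...,b_l> is the (unique)
   w satisfying this. *)
Definition has_code_spectrum (n : nat) (w : 'S_n) (b : seq nat) : Prop :=
  forall m, 1 <= m <= n - 1 -> code w m = count_mem m b.

(* Theta is a subset of the simple roots {a_1,..,a_{n-1}}, encoded by the
   indices of its roots.  w \in W^Theta iff descents of w occur only at
   positions p with a_p \notin Theta, i.e. w(p) < w(p+1) for all a_p in Theta. *)
Definition in_W_Theta (n : nat) (Theta : pred nat) (w : 'S_n) : Prop :=
  forall p, 1 <= p <= n - 1 -> Theta p -> wl w p < wl w p.+1.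

(* A permutation ascends at p exactly when its code does not drop there: the
   entries after p+1 that are smaller than w(p+1) are, together with w(p+1),
   all counted in the code at p if w(p) > w(p+1), and otherwise contain those
   counted at p.  For the permutation with code spectrum i <= j <= k the code
   at p is the number of occurrences of p among i, j, k, so membership in
   W^Theta says that this count never drops at a position of Theta, which is a
   finite case analysis on i, j, k. *)
From mathcomp Require Import all_boot all_fingroup.
From mathcomp Require Import zify.
Set Implicit Arguments. Unset Strict Implicit. Unset Printing Implicit Defensive.

Section OneLine.

Variables (n : nat) (w : 'S_n).

Lemma wlS p (lt_pn : p < n) : wl w p.+1 = (w (Ordinal lt_pn)).+1.
Proof.
rewrite /wl /oneline /= (nth_map (Ordinal lt_pn)) ?size_enum_ord //.
by congr (w _).+1; apply: val_inj; rewrite /= nth_enum_ord.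
Qed.

Lemma wl_inj p q : 1 <= p <= n -> 1 <= q <= n -> wl w p = wl w q -> p = q.
Proof.
case: p q => [|p] [|q] // /andP[_ lt_pn] /andP[_ lt_qn].
rewrite (wlS lt_pn) (wlS lt_qn) => -[/val_inj/perm_inj eq_pq].
by rewrite -[p]/(val (Ordinal lt_pn)) eq_pq.
Qed.

Lemma code_ltS p : p < n ->
  code w p = (wl w p.+1 < wl w p) + count (fun q => wl w q < wl w p) (iota p.+2 (n - p.+1)).
Proof. by move=> lt_pn; rewrite /code -subnSK. Qed.

Lemma ascent_code_le p : 1 <= p < n ->
  (wl w p < wl w p.+1) = (code w p <= code w p.+1).
Proof.
move=> /andP[p_gt0 lt_pn]; rewrite code_ltS // /code.
have neq_wl : wl w p != wl w p.+1.
  by apply/eqP => /wl_inj; lia.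
case: ltngtP neq_wl => // [lt_wl | gt_wl] _.
- by rewrite add0n; apply/esym/sub_count => q /= /ltn_trans; apply.
- rewrite add1n ltnNge; apply/esym/negbF.
  by apply: sub_count => q /= /ltn_trans; apply.
Qed.

Lemma in_W_Theta_code (Theta : pred nat) :
  (forall p, Theta p -> 1 <= p <= n - 1) ->
  in_W_Theta Theta w <-> (forall p, Theta p -> code w p <= code w p.+1).
Proof.
move=> Theta_roots; split=> asc p.
- move=> Tp; have p_root := Theta_roots p Tp.
  by rewrite -ascent_code_le; [apply: asc | lia].
- by move=> p_root Tp; rewrite ascent_code_le; [apply: asc | lia].
Qed.

Lemma code_spectrumE b : has_code_spectrum w b -> all (fun m => m < n) b ->
  forall p, 1 <= p <= n -> code w p = count_mem p b.
Proof.
move=> spec_b lt_b_n p /andP[p_gt0]; rewrite leq_eqVlt => /predU1P[-> | lt_pn].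
- rewrite /code subnn; apply/esym/count_memPn; apply: contraTN lt_b_n => n_b.
  by apply/allPn; exists n; rewrite ?ltnn.
- by apply: spec_b; lia.
Qed.

End OneLine.

Lemma count_triple_le_succ_on (Theta : pred nat) (i j k : nat) : i <= j <= k ->
  (forall p, Theta p -> count_mem p [:: i; j; k] <= count_mem p.+1 [:: i; j; k]) <->
  [\/ ~ Theta i /\ ~ Theta j /\ ~ Theta k,
      j = i.+1 /\ Theta i /\ ~ Theta i.+1 /\ ~ Theta k,
      k = j.+1 /\ Theta j /\ ~ Theta i /\ ~ Theta j.+1
    | k.-1 = j /\ j = i.+1 /\ Theta i /\ Theta i.+1 /\ ~ Theta i.+2].
Proof.
move=> le_ijk; split=> [asc | cases p Tp] /=.
- have not_Tk : ~ Theta k by move=> /asc /=; lia.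
  have Tj_gap : Theta j -> k = j.+1 by move=> /asc /=; lia.
  have Ti_gap : Theta i -> j = i.+1 by move=> /asc /=; lia.
  case: (boolP (Theta i)) => Ti; case: (boolP (Theta j)) => Tj.
  + have eq_k := Tj_gap Tj; have eq_j := Ti_gap Ti; subst j k.
    by apply: Or44.
  + have eq_j := Ti_gap Ti; subst j.
    by apply: Or42; do !split=> //; apply/negP.
  + have eq_k := Tj_gap Tj; subst k.
    by apply: Or43; do !split=> //; apply/negP.
  + by apply: Or41; do !split=> //; apply/negP.
- have neq_p x : ~ Theta x -> p != x by move=> not_Tx; apply/eqP => px; rewrite px in Tp.
  case: cases => [[/neq_p ? [/neq_p ? /neq_p ?]]
                 | [-> [_ [/neq_p ? /neq_p ?]]]
                 | [-> [Tj [not_Ti /neq_p ?]]]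
                 | [eq_k [eq_j [_ [_ /neq_p ?]]]]].
  + lia.
  + lia.
  + have neq_ij : i != j by apply/eqP => eq_ij; rewrite eq_ij in not_Ti.
    have := neq_p i not_Ti; lia.
  + lia.
Qed.

Theorem lemma5p2 (n : nat) (Theta : pred nat) (i j k : nat) (w : 'S_n) :
  2 <= n ->
  (forall m, Theta m -> 1 <= m <= n - 1) ->
  1 <= i <= n - 3 -> 1 <= j <= n - 2 -> 1 <= k <= n - 1 ->
  i <= j <= k ->
  has_code_spectrum w [:: i; j; k] ->
  (in_W_Theta Theta w <->
   [\/ ~ Theta i /\ ~ Theta j /\ ~ Theta k,
       j = i.+1 /\ Theta i /\ ~ Theta i.+1 /\ ~ Theta k,
       k = j.+1 /\ Theta j /\ ~ Theta i /\ ~ Theta j.+1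
     | k.-1 = j /\ j = i.+1 /\ Theta i /\ Theta i.+1 /\ ~ Theta i.+2]).
Proof.
move=> _ Theta_roots _ _ k_bounds le_ijk spec.
have spec_lt_n : all (fun m => m < n) [:: i; j; k] by rewrite /=; lia.
rewrite -(count_triple_le_succ_on Theta le_ijk) (in_W_Theta_code w Theta_roots).
split=> asc p Tp; have := asc p Tp; have := Theta_roots p Tp.
all: by move=> p_root; rewrite !(code_spectrumE spec spec_lt_n) //; lia.
Qed.
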